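(* Let $p\in(0,1)$, $m\ge1$, and let $\tilde G^p_m$ be as defined in the context. For every integer $k\ge0$ such that the event has positive probability, conditional on $s(\tilde G^p_m)=k$, the graph $\tilde G^p_m$ is uniformly distributed on the set of connected graphs on $[m]$ with $m+k-1$ edges; in particular this conditional law does not depend on $p$.
   Context: Ordered depth-first search ${\bf oDFS}(G)$ for a connected graph $G$ on $[m]$: set $\mathcal O_0=(1)$, $\mathcal A_0=\emptyset$; for $i=0,\dots,m-1$ let $v_i$ be the first element of $\mathcal O_i$, $\mathcal N_i$ the neighbours of $v_i$ outside $\mathcal A_i\cup\mathcal O_i$, $\mathcal A_{i+1}=\mathcal A_i\cup\{v_i\}$, and $\mathcal O_{i+1}$ obtained by deleting $v_i$ from the front of $\mathcal O_i$ and placing $\mathcal N_i$ in increasing order at the front. Depth-first walk $X(i)=|\mathcal O_i|-1$; area of a tree $T$: $a(T)=\sum_{i=1}^{m-1}X(i)$; an edge $uv\notin E(T)$ is permitted by ${\bf oDFS}(T)$ if $u,v\in\mathcal O_i$ for some $i$. $\tilde T^p_m$ is a random tree on $[m]$ with $\mathbb P(\tilde T^p_m=T)\propto(1-p)^{-a(T)}$; $\tilde G^p_m$ is obtained from $\tilde T^p_m$ by adding each permitted edge independently with probability $p$. The surplus of a connected graph $G$ on $[m]$ is $s(G)=|E(G)|-(m-1)$. *)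

(* Vertices [m] = {1..m} are represented by 'I_m = {0..m-1}
   (order-preserving relabelling i |-> i-1, so vertex 1 is ord 0).
   A graph on [m] is an edge set E : {set 'I_m * 'I_m} whose pairs (u,v)
   all satisfy u < v (each unordered edge {u,v} stored once). *)
From HB Require Import structures.
From mathcomp Require Import all_boot all_order all_algebra.
Set Implicit Arguments. Unset Strict Implicit. Unset Printing Implicit Defensive.
Import Order.TTheory GRing.Theory Num.Theory.

Section Graphs.
Variable m : nat.
Notation V := ('I_m).
Notation graph := {set V * V}.

Definition simple_graph (E : graph) : bool := [forall e in E, (e.1 < e.2)%N].

Definition adj (E : graph) : rel V := fun u v => ((u, v) \in E) || ((v, u) \in E).

Definition connected_graph (E : graph) : bool :=
  simple_graph E && [forall u : V, forall v : V, connect (adj E) u v].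

Definition is_tree (E : graph) : bool := connected_graph E && (#|E| == m.-1).

(* oDFS state (O_i, A_i); O_i as a sequence whose first element is at the front *)
Definition odfs_step (E : graph) (st : seq V * {set V}) : seq V * {set V} :=
  let: (Os, A) := st in
  match Os with
  | [::] => ([::], A)
  | v :: Ot =>
      let N := [seq w <- enum V | adj E v w && (w \notin A) && (w \notin Os)] in
      (N ++ Ot, v |: A)
  end.

(* O_0 = (1): the first element of 'I_m, i.e. vertex 1 *)
Definition odfs_init : seq V * {set V} := (take 1 (enum V), set0).

Definition odfs_state (E : graph) (i : nat) : seq V * {set V} :=
  iter i (odfs_step E) odfs_init.

Definition odfs_O (E : graph) (i : nat) : seq V := (odfs_state E i).1.

Definition dfwalk (E : graph) (i : nat) : nat := (size (odfs_O E i)).-1.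

Definition area (T : graph) : nat := \sum_(1 <= i < m) dfwalk T i.

Definition permitted (T : graph) : graph :=
  [set e : V * V | [&& (e.1 < e.2)%N, e \notin T &
     [exists i : 'I_m.+1, (e.1 \in odfs_O T i) && (e.2 \in odfs_O T i)]]].

Variable R : realFieldType.
Local Open Scope ring_scope.

Definition tree_weight (p : R) (T : graph) : R := (1 - p) ^- area T.
Definition tree_Z (p : R) : R := \sum_(T : graph | is_tree T) tree_weight p T.
Definition tree_law (p : R) (T : graph) : R := tree_weight p T / tree_Z p.

(* law of G~^p_m: T~ plus each permitted edge independently with prob. p *)
Definition graph_law (p : R) (G : graph) : R :=
  \sum_(T : graph | is_tree T)
     (if (T \subset G) && (G :\: T \subset permitted T) then
        tree_law p T * p ^+ #|G :\: T| *
          (1 - p) ^+ (#|permitted T| - #|G :\: T|)%N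
      else 0).

Definition surplus_is (G : graph) (k : nat) : bool := #|G| == (k + m.-1)%N.

Definition prob_surplus (p : R) (k : nat) : R :=
  \sum_(G : graph | surplus_is G k) graph_law p G.

Definition cond_law (p : R) (k : nat) (G : graph) : R :=
  (if surplus_is G k then graph_law p G else 0) / prob_surplus p k.

Definition n_conn (k : nat) : nat :=
  #|[set G : graph | connected_graph G && (#|G| == (m + k).-1)]|.

End Graphs.

(* Run oDFS on a connected graph G.  Every vertex except the root is pushed on the
   stack exactly once, by the vertex then at the front; these discovery edges form
   the oDFS tree D(G), a spanning tree of G.
   In the sum defining P(G~ = G) only T = D(G) contributes, with weight
   (1-p)^-a p^k (1-p)^(a-k) / Z = (p/(1-p))^k / Z for every connected G of surplus k
   (and 0 otherwise); normalising by P(s(G~) = k) gives the uniform law.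
   Vertices are 'I_m with m = n.+1, the root being ord0. *)
From HB Require Import structures.
From mathcomp Require Import all_boot all_order all_algebra.
Set Implicit Arguments. Unset Strict Implicit. Unset Printing Implicit Defensive.
Import Order.TTheory GRing.Theory Num.Theory.

Section ODFS.
Variable n : nat.
Local Notation m := n.+1.
Local Notation V := 'I_m.
Local Notation graph := {set V * V}.
Implicit Types (E T G : graph) (u v w x : V).

Definition explored E i : {set V} := (odfs_state E i).2.
Definition visited E i x : bool := (x \in explored E i) || (x \in odfs_O E i).

Lemma odfs_state0 E : odfs_state E 0 = ([:: ord0], set0).
Proof. by rewrite /odfs_state /= /odfs_init enum_ordSl /= take0. Qed.

Lemma odfs_O0 E : odfs_O E 0 = [:: ord0].
Proof. by rewrite /odfs_O odfs_state0. Qed.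

Lemma explored0 E : explored E 0 = set0.
Proof. by rewrite /explored odfs_state0. Qed.

Lemma odfs_step_cons E i v t : odfs_O E i = v :: t ->
  odfs_O E i.+1 =
    [seq w <- enum V | adj E v w && (w \notin explored E i) && (w \notin v :: t)] ++ t
  /\ explored E i.+1 = v |: explored E i.
Proof.
by rewrite /odfs_O /explored /odfs_state iterS; case: (iter _ _ _) => Os A /= ->.
Qed.

Lemma odfs_step_nil E i : odfs_O E i = [::] ->
  odfs_O E i.+1 = odfs_O E i /\ explored E i.+1 = explored E i.
Proof.
by rewrite /odfs_O /explored /odfs_state iterS; case: (iter _ _ _) => Os A /= ->.
Qed.

Lemma adj_sym E : symmetric (adj E).
Proof. by move=> x y; rewrite /adj orbC. Qed.

Lemma adj_subset (F1 F2 : graph) u v : F1 \subset F2 -> adj F1 u v -> adj F2 u v.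
Proof. by move=> /subsetP sF; rewrite /adj => /orP [] /sF ->; rewrite ?orbT. Qed.

Section OneRun.
Variable E : graph.

Lemma odfs_invariant i :
  uniq (odfs_O E i) /\ {in odfs_O E i, forall x, x \notin explored E i}.
Proof.
elim: i => [|i [IHuniq IHdisj]]; first by rewrite odfs_O0 explored0; split=> // x _; rewrite inE.
case Ho: (odfs_O E i) => [|v t].
  by have [-> ->] := odfs_step_nil Ho; rewrite Ho.
have [-> ->] := odfs_step_cons Ho.
rewrite Ho /= in IHuniq IHdisj; case/andP: IHuniq => vt ut.
split.
  rewrite cat_uniq ut filter_uniq ?enum_uniq // andbT.
  by apply/hasPn => x xt; rewrite mem_filter !inE xt orbT !andbF.
move=> x; rewrite mem_cat mem_filter => /orP [/andP [/andP [/andP [_ xA] xO] _]|xt];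
  rewrite !inE negb_or.
  by move: xO; rewrite inE negb_or => /andP [-> _]; rewrite xA.
rewrite IHdisj ?inE ?xt ?orbT // andbT.
by apply: contraNneq vt => <-.
Qed.

Lemma odfs_O_uniq i : uniq (odfs_O E i).
Proof. by case: (odfs_invariant i). Qed.

Lemma stack_unexplored i : {in odfs_O E i, forall x, x \notin explored E i}.
Proof. by case: (odfs_invariant i). Qed.

Lemma visitedS i x : visited E i x -> visited E i.+1 x.
Proof.
rewrite /visited; case Ho: (odfs_O E i) => [|v t].
  by have [-> ->] := odfs_step_nil Ho; rewrite Ho.
have [-> ->] := odfs_step_cons Ho.
by rewrite !inE mem_cat => /orP [->|/orP [->|->]]; rewrite ?orbT.
Qed.

Lemma exploredS i x : x \in explored E i -> x \in explored E i.+1.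
Proof.
case Ho: (odfs_O E i) => [|v t]; first by have [_ ->] := odfs_step_nil Ho.
by have [_ ->] := odfs_step_cons Ho; rewrite inE => ->; rewrite orbT.
Qed.

Lemma visited_mono i j x : i <= j -> visited E i x -> visited E j x.
Proof.
move/subnK => <-; elim: (j - i) => [//|d IH] /IH; rewrite addSn; exact: visitedS.
Qed.

Lemma explored_mono i j x : i <= j -> x \in explored E i -> x \in explored E j.
Proof.
move/subnK => <-; elim: (j - i) => [//|d IH] /IH; rewrite addSn; exact: exploredS.
Qed.

Lemma on_stack_visited i j x : x \in odfs_O E j -> j <= i -> visited E i x.
Proof. by move=> xj le; apply: (visited_mono le); rewrite /visited xj orbT. Qed.

Lemma root_visited i : visited E i ord0.
Proof. by apply: (@on_stack_visited _ 0); rewrite ?odfs_O0 ?mem_head. Qed.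

(* A vertex popped at time i is explored ever after, so it was on the stack only
   at times j <= i. *)
Lemma on_stack_before_pop i j v t : odfs_O E i = v :: t -> v \in odfs_O E j -> j <= i.
Proof.
move=> Ho vj; rewrite leqNgt; apply/negP => lt_ij.
have vA : v \in explored E i.+1 by have [_ ->] := odfs_step_cons Ho; rewrite setU11.
by have := stack_unexplored vj; rewrite (explored_mono lt_ij vA).
Qed.

Lemma explored_popped i x : x \in explored E i ->
  exists2 j, j < i & exists t, odfs_O E j = x :: t.
Proof.
elim: i => [|i IH]; first by rewrite explored0 inE.
case Ho: (odfs_O E i) => [|v t].
  have [_ ->] := odfs_step_nil Ho.
  by case/IH => j lt_ji popj; exists j => //; apply: ltnW.
have [_ ->] := odfs_step_cons Ho; rewrite !inE => /orP [/eqP ->|/IH [j lt_ji popj]].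
  by exists i => //; exists t.
by exists j => //; apply: ltnW.
Qed.

Lemma pop_time_unique i j x t t' :
  odfs_O E i = x :: t -> odfs_O E j = x :: t' -> i = j.
Proof.
by move=> Hi Hj; apply/anti_leq; rewrite (on_stack_before_pop Hj) ?(on_stack_before_pop Hi)
  ?Hi ?Hj ?mem_head.
Qed.

Lemma unexplored_before_pop ia ib a b ta tb :
  odfs_O E ia = a :: ta -> odfs_O E ib = b :: tb -> ia < ib -> b \notin explored E ia.
Proof.
move=> Ha Hb lt_ab; apply/negP => /explored_popped [j lt_j [t' Hj]].
by move: lt_ab; rewrite (pop_time_unique Hb Hj) ltnNge ltnW.
Qed.

Lemma explored_neighbours_visited i x y :
  x \in explored E i -> adj E x y -> visited E i y.
Proof.
elim: i x y => [|i IH] x y; first by rewrite explored0 inE.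
case Ho: (odfs_O E i) => [|v t].
  by rewrite /visited; have [-> ->] := odfs_step_nil Ho; apply: IH.
have [Oe Ae] := odfs_step_cons Ho; rewrite /visited Oe Ae !inE mem_cat.
case/orP => [/eqP ->|xA] xy; last first.
  by have := visitedS (IH _ _ xA xy); rewrite /visited Oe Ae !inE mem_cat.
case yA: (y \in explored E i); first by rewrite orbT.
case yO: (y \in v :: t); last by rewrite mem_filter xy yA yO mem_enum orbT.
by move: yO; rewrite inE => /orP [->|->]; rewrite ?orbT.
Qed.

Lemma card_explored i : odfs_O E i = [::] \/ #|explored E i| = i.
Proof.
elim: i => [|i [IH|IH]]; first by right; rewrite explored0 cards0.
  by left; have [-> _] := odfs_step_nil IH.
case Ho: (odfs_O E i) => [|v t]; first by left; have [-> _] := odfs_step_nil Ho.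
right; have [_ ->] := odfs_step_cons Ho; rewrite cardsU1 IH.
by rewrite stack_unexplored // Ho mem_head.
Qed.

Lemma visited_connected_to_root i x : visited E i x -> connect (adj E) ord0 x.
Proof.
elim: i x => [|i IH] x.
  by rewrite /visited explored0 odfs_O0 !inE => /eqP ->.
case Ho: (odfs_O E i) => [|v t].
  by rewrite /visited; have [-> ->] := odfs_step_nil Ho; apply: IH.
have [Oe Ae] := odfs_step_cons Ho; rewrite /visited Oe Ae !inE mem_cat.
have root_v : connect (adj E) ord0 v by apply: IH; rewrite /visited Ho mem_head orbT.
case/orP => [/orP [/eqP -> //|xA]|/orP [xN|xt]].
- by apply: IH; rewrite /visited xA.
- move: xN; rewrite mem_filter => /andP [/andP [/andP [vx _] _] _].
  by apply: connect_trans root_v (connect1 vx).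
- by apply: IH; rewrite /visited Ho in_cons xt !orbT.
Qed.

Lemma explored_all_connected :
  simple_graph E -> explored E m = setT -> connected_graph E.
Proof.
move=> sE full; rewrite /connected_graph sE; apply/forallP => u; apply/forallP => v.
have root_all x : connect (adj E) ord0 x.
  by apply: (@visited_connected_to_root m); rewrite /visited full inE.
rewrite (connect_trans _ (root_all v)) // (sym_connect_sym (@adj_sym E)).
exact: root_all.
Qed.

Section Connected.
Hypothesis connE : connected_graph E.

Lemma explored_all : explored E m = setT.
Proof.
case/andP: connE => _ /forallP conn.
case: (card_explored m) => [Om|cA]; last first.
  by apply/eqP; rewrite eqEcard subsetT cardsT card_ord cA leqnn.
apply/setP => y; rewrite inE.
case/connectP: (forallP (conn ord0) y) => pth walk ->.
have : ord0 \in explored E m by move: (root_visited m); rewrite /visited Om orbF.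
elim: pth (ord0 : V) walk => [//|z pth IHp] x /= /andP [xz walk] xA.
by apply: IHp walk _; move: (explored_neighbours_visited xA xz); rewrite /visited Om orbF.
Qed.

Lemma run_finished i : m <= i -> explored E i = setT /\ odfs_O E i = [::].
Proof.
move=> le_mi; have Ai : explored E i = setT.
  by apply/setP => y; rewrite inE (explored_mono le_mi) // explored_all inE.
split=> //; case Ho: (odfs_O E i) => [//|v t].
by have := @stack_unexplored i v; rewrite Ho mem_head Ai inE => /(_ isT).
Qed.

Lemma pop_time_exists x : exists2 j, j < m & exists t, odfs_O E j = x :: t.
Proof. by apply: explored_popped; rewrite explored_all inE. Qed.

End Connected.
End OneRun.

Definition front E i : V := head ord0 (odfs_O E i).
Definition discovered E i w : bool := (w \in odfs_O E i.+1) && (w \notin odfs_O E i).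
Definition edge_of u w : V * V := if u < w then (u, w) else (w, u).
Definition discoveries E : {set 'I_m * V} :=
  [set iw : 'I_m * V | discovered E iw.1 iw.2].
Definition dfs_tree E : graph :=
  [set edge_of (front E iw.1) iw.2 | iw : 'I_m * V in discoveries E].

Lemma edge_of_inj u w u' w' : edge_of u w = edge_of u' w' ->
  (u = u' /\ w = w') \/ (u = w' /\ w = u').
Proof. by rewrite /edge_of; case: (u < w); case: (u' < w'); case=> -> ->; auto. Qed.

Lemma edge_ofC u w : u != w -> edge_of u w = edge_of w u.
Proof.
move=> uw; rewrite /edge_of; case: (ltngtP u w) => // /val_inj eq_uw.
by rewrite eq_uw eqxx in uw.
Qed.

Lemma edge_of_lt u w : u != w -> (edge_of u w).1 < (edge_of u w).2.
Proof.
move=> uw; rewrite /edge_of; case: (ltngtP u w) => //= /val_inj eq_uw.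
by rewrite eq_uw eqxx in uw.
Qed.

Lemma edge_of_adj (F : graph) u w : edge_of u w \in F -> adj F u w.
Proof. by rewrite /edge_of /adj; case: (u < w) => ->; rewrite ?orbT. Qed.

Lemma adj_edge_of (F : graph) u w : simple_graph F -> adj F u w -> edge_of u w \in F.
Proof.
move=> /forallP sF; rewrite /adj /edge_of => /orP [] uw; have /= lt := implyP (sF _) uw.
  by rewrite lt.
by rewrite ltnNge ltnW.
Qed.

Section Discovery.
Variable E : graph.

Lemma discovered_front i w : discovered E i w -> exists t, odfs_O E i = front E i :: t.
Proof.
rewrite /discovered /front; case Ho: (odfs_O E i) => [|v t]; last by exists t.
by have [-> _] := odfs_step_nil Ho; rewrite Ho.
Qed.

Lemma discovered_unvisited i w : discovered E i w -> ~~ visited E i w.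
Proof.
move=> dw; have [t Ho] := discovered_front dw; case/andP: dw => w1 w0.
rewrite /visited negb_or w0 andbT; apply: contraTN w1 => /exploredS wA.
by apply/negP => /stack_unexplored; rewrite wA.
Qed.

Lemma discovered_adj i w : discovered E i w -> adj E (front E i) w.
Proof.
move=> dw; have [t Ho] := discovered_front dw; case/andP: dw.
have [-> _] := odfs_step_cons Ho; rewrite Ho mem_cat mem_filter in_cons.
by case/orP => [/andP [/andP [/andP [->]]]|->]; rewrite ?orbT.
Qed.

Lemma discoveredP i v t w : odfs_O E i = v :: t -> adj E v w -> ~~ visited E i w ->
  discovered E i w.
Proof.
move=> Ho vw; rewrite /visited negb_or => /andP [wA wO]; rewrite /discovered wO andbT.
by have [-> _] := odfs_step_cons Ho; rewrite mem_cat mem_filter vw wA -Ho wO mem_enum.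
Qed.

Lemma discovered_neq_front i w : discovered E i w -> front E i != w.
Proof.
move=> dw; have [t Ho] := discovered_front dw; move/discovered_unvisited: dw.
by rewrite /visited Ho; apply: contra => /eqP ->; rewrite mem_head orbT.
Qed.

Lemma discovered_once i j w : discovered E i w -> discovered E j w -> i = j.
Proof.
wlog le_ij : i j / i <= j => [hwlog di dj|].
  by case: (leqP i j) => [|/ltnW] le; [apply: hwlog | symmetry; apply: hwlog].
move=> /andP [w1 _] dj; apply/eqP; rewrite eqn_leq le_ij /=.
apply: contraTT (discovered_unvisited dj); rewrite -ltnNge negbK => lt_ij.
exact: on_stack_visited w1 lt_ij.
Qed.

Lemma discovered_before j w : w \in odfs_O E j -> w != ord0 ->
  exists2 i, i < j & discovered E i w.
Proof.
elim: j => [|j IH] wj w0; first by move: wj; rewrite odfs_O0 inE (negbTE w0).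
case wj': (w \in odfs_O E j); last by exists j; rewrite ?/discovered ?wj ?wj'.
by have [i lt_ij di] := IH wj' w0; exists i => //; apply: ltnW.
Qed.

Lemma dfs_tree_simple : simple_graph (dfs_tree E).
Proof.
apply/forallP => e; apply/implyP => /imsetP [[i w]]; rewrite inE /= => dw ->.
exact/edge_of_lt/discovered_neq_front.
Qed.

Lemma dfs_tree_sub : simple_graph E -> dfs_tree E \subset E.
Proof.
move=> sE; apply/subsetP => e /imsetP [[i w]]; rewrite inE /= => dw ->.
exact/adj_edge_of/discovered_adj.
Qed.

Lemma dfs_tree_edge_inj :
  {in discoveries E &, injective (fun iw : 'I_m * V => edge_of (front E iw.1) iw.2)}.
Proof.
move=> [i w] [j w']; rewrite !inE /= => di dj /edge_of_inj [[_ eq_w]|[eq_u eq_w]].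
  by subst w'; rewrite (val_inj (discovered_once di dj)).
have [t Hj] := discovered_front dj; have [t' Hi] := discovered_front di.
have lt_ij : i < j.
  rewrite ltnNge; apply: contraTN (discovered_unvisited di) => le_ji.
  by rewrite negbK; apply: (on_stack_visited _ le_ji); rewrite Hj eq_w mem_head.
have lt_ji : j < i.
  rewrite ltnNge; apply: contraTN (discovered_unvisited dj) => le_ij.
  by rewrite negbK; apply: (on_stack_visited _ le_ij); rewrite Hi -eq_u mem_head.
by have := ltn_trans lt_ij lt_ji; rewrite ltnn.
Qed.

Lemma discovered_vertices : connected_graph E ->
  [set iw.2 | iw in discoveries E] = [set~ ord0].
Proof.
move=> connE; apply/setP => w; rewrite !inE; apply/imsetP/idP.
  case=> [[i w']]; rewrite inE /= => dw ->; apply: contraTneq (discovered_unvisited dw).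
  by move=> ->; rewrite negbK root_visited.
move=> w0; have [j lt_jm [t Hj]] := pop_time_exists connE w.
have [i lt_ij di] : exists2 i, i < j & discovered E i w.
  by apply: discovered_before w0; rewrite Hj mem_head.
by exists (Ordinal (ltn_trans lt_ij lt_jm), w); rewrite ?inE.
Qed.

Lemma card_dfs_tree : connected_graph E -> #|dfs_tree E| = n.
Proof.
move=> connE; rewrite /dfs_tree (card_in_imset dfs_tree_edge_inj).
have snd_inj : {in discoveries E &, injective (fun iw : 'I_m * V => iw.2)}.
  move=> [i w] [j w']; rewrite !inE /= => di dj eq_w; subst w'.
  by rewrite (val_inj (discovered_once di dj)).
by rewrite -(card_in_imset snd_inj) discovered_vertices // cardsC1 card_ord.
Qed.

End Discovery.

Lemma odfs_state_ext E1 E2 :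
  (forall i v t w, odfs_O E1 i = v :: t -> ~~ visited E1 i w ->
     adj E1 v w = adj E2 v w) ->
  odfs_state E1 =1 odfs_state E2.
Proof.
move=> agree; elim=> [|i IH]; first by rewrite !odfs_state0.
rewrite /odfs_state !iterS -/(odfs_state E1 i) -/(odfs_state E2 i) -IH.
have := agree i; rewrite /visited /odfs_O /explored.
case: (odfs_state E1 i) => [[|v t] A] //= agree_i.
congr (_ ++ _, _); apply: eq_filter => w.
case wA: (w \in A); rewrite ?andbF //; case wO: (w \in v :: t); rewrite ?andbF //.
by rewrite (agree_i v t w) // wA wO.
Qed.

Lemma odfs_dfs_tree E : connected_graph E -> odfs_state E =1 odfs_state (dfs_tree E).
Proof.
move=> connE; have sE : simple_graph E by case/andP: connE.
apply: odfs_state_ext => i v t w Ho wnew.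
case: (ltnP i m) => lt_im; last first.
  by have [Ai _] := run_finished connE lt_im; move: wnew; rewrite /visited Ai inE.
apply/idP/idP => [vw|]; last exact/adj_subset/dfs_tree_sub.
apply/edge_of_adj/imsetP; exists (Ordinal lt_im, w); last by rewrite /front Ho.
by rewrite inE; apply: discoveredP Ho vw wnew.
Qed.

Lemma dfs_tree_ext E1 E2 : odfs_state E1 =1 odfs_state E2 -> dfs_tree E1 = dfs_tree E2.
Proof.
move=> same; have sameO i : odfs_O E1 i = odfs_O E2 i by rewrite /odfs_O same.
rewrite /dfs_tree; have -> : discoveries E1 = discoveries E2.
  by apply/setP => iw; rewrite !inE /discovered !sameO.
by apply: eq_imset => iw; rewrite /front sameO.
Qed.

Lemma dfs_tree_is_tree E : connected_graph E -> is_tree (dfs_tree E).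
Proof.
move=> connE; rewrite /is_tree card_dfs_tree // eqxx andbT.
apply: explored_all_connected; first exact: dfs_tree_simple.
by rewrite /explored -odfs_dfs_tree // -/(explored E m) explored_all.
Qed.

Lemma dfs_tree_of_tree T : is_tree T -> dfs_tree T = T.
Proof.
case/andP => connT /eqP cardT; have sT : simple_graph T by case/andP: connT.
by apply/eqP; rewrite eqEcard dfs_tree_sub // cardT card_dfs_tree /=.
Qed.

Lemma odfs_permitted_ext T G : T \subset G -> G :\: T \subset permitted T ->
  odfs_state T =1 odfs_state G.
Proof.
move=> sTG sGT; apply: odfs_state_ext => i v t w Ho wnew.
apply/idP/idP => [|vw]; first exact: adj_subset.
apply: contraTT wnew => nvwT; rewrite negbK.
have [j /andP [vj wj]] : exists j, (v \in odfs_O T j) && (w \in odfs_O T j).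
  case/orP: vw => [vwG|wvG].
  - have : (v, w) \in G :\: T.
      by rewrite inE vwG andbT; apply: contraNN nvwT => vwT; rewrite /adj vwT.
    by move/(subsetP sGT); rewrite inE => /and3P [_ _ /existsP [j vwj]]; exists j.
  - have : (w, v) \in G :\: T.
      by rewrite inE wvG andbT; apply: contraNN nvwT => wvT; rewrite /adj wvT orbT.
    move/(subsetP sGT); rewrite inE => /and3P [_ _ /existsP [j /andP [wj vj]]].
    by exists j; rewrite vj wj.
exact: on_stack_visited wj (on_stack_before_pop Ho vj).
Qed.

Lemma dfs_tree_unique T G : is_tree T -> T \subset G -> G :\: T \subset permitted T ->
  T = dfs_tree G.
Proof.
by move=> treeT sTG sGT; rewrite -{1}(dfs_tree_of_tree treeT); apply/dfs_tree_ext/odfs_permitted_ext.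
Qed.


(* When a is popped before b and ab is an edge of G outside the oDFS tree, b was
   already on the stack when a was popped (otherwise a would have discovered b). *)
Lemma non_tree_edge_on_stack G ia ib a b ta tb : adj G a b ->
  edge_of a b \notin dfs_tree G ->
  odfs_O G ia = a :: ta -> odfs_O G ib = b :: tb -> ia < ib -> ia < m ->
  b \in odfs_O G ia.
Proof.
move=> ab notD Ha Hb lt_ab lt_am; apply: contraNT notD => bO.
have bnew : ~~ visited G ia b by rewrite /visited negb_or bO (unexplored_before_pop Ha Hb).
apply/imsetP; exists (Ordinal lt_am, b); last by rewrite /front Ha.
by rewrite inE; apply: discoveredP Ha ab bnew.
Qed.

Lemma dfs_tree_extra_permitted G : connected_graph G ->
  G :\: dfs_tree G \subset permitted (dfs_tree G).
Proof.
move=> connG; have sG : simple_graph G by case/andP: connG.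
have sameO i : odfs_O (dfs_tree G) i = odfs_O G i by rewrite /odfs_O (odfs_dfs_tree connG).
apply/subsetP => -[u w]; rewrite !inE /= => /andP [notD uwG].
have lt_uw : u < w by have := forallP sG (u, w); rewrite uwG.
have uw : u != w by apply: contraTneq lt_uw => ->; rewrite ltnn.
have Euw : edge_of u w = (u, w) by rewrite /edge_of lt_uw.
have [iu lt_um [tu Hu]] := pop_time_exists connG u.
have [iw lt_wm [tw Hw]] := pop_time_exists connG w.
rewrite lt_uw notD; apply/existsP; case: (ltngtP iu iw) => [lt_i|lt_i|eq_i].
- exists (Ordinal (leqW lt_um)); rewrite /= !sameO Hu mem_head -Hu.
  by apply: non_tree_edge_on_stack Hu Hw lt_i lt_um; rewrite ?Euw // /adj uwG.
- exists (Ordinal (leqW lt_wm)); rewrite /= !sameO Hw mem_head -Hw andbT.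
  apply: non_tree_edge_on_stack Hw Hu lt_i lt_wm; first by rewrite /adj uwG orbT.
  by rewrite -edge_ofC // Euw.
- by move: Hw; rewrite -eq_i Hu => -[eq_uw _]; rewrite eq_uw eqxx in uw.
Qed.

Definition stack_pairs E : {set 'I_m * V} :=
  [set iw : 'I_m * V | iw.2 \in behead (odfs_O E iw.1)].

Lemma card_stack_pairs E : #|stack_pairs E| = area E.
Proof.
rewrite -sum1_card (eq_bigl (fun iw : 'I_m * V =>
  predT iw.1 && (iw.2 \in behead (odfs_O E iw.1)))); last by move=> iw; rewrite inE.
rewrite -(pair_big_dep predT (fun (i : 'I_m) (w : V) => w \in behead (odfs_O E i))
  (fun _ _ => 1%N)) /=.
rewrite /area /dfwalk (eq_bigr (fun i : 'I_m => (size (odfs_O E i)).-1)); last first.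
  move=> i _; rewrite sum1_card -size_behead; apply/card_uniqP.
  by move: (odfs_O_uniq E i); case: (odfs_O E i) => //= x s /andP [].
rewrite -(big_mkord predT (fun i => (size (odfs_O E i)).-1)).
change (\sum_(0 <= i < m) (size (odfs_O E i)).-1 = \sum_(1 <= i < m) (size (odfs_O E i)).-1)%N.
by rewrite big_ltn // odfs_O0.
Qed.

Lemma stack_order E j ia ib a b ta tb : a \in odfs_O E j -> b \in odfs_O E j -> a != b ->
  odfs_O E ia = a :: ta -> odfs_O E ib = b :: tb -> ia < ib -> b \in ta.
Proof.
move=> aj bj ab Ha Hb lt_ab.
have := on_stack_visited bj (on_stack_before_pop Ha aj).
rewrite /visited (negbTE (unexplored_before_pop Ha Hb lt_ab)) Ha in_cons /=.
by case/orP => // /eqP eq_ba; rewrite eq_ba eqxx in ab.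
Qed.

Lemma front_pair_not_tree_edge E i t w : odfs_O E i = front E i :: t -> w \in t ->
  edge_of (front E i) w \notin dfs_tree E.
Proof.
move=> Hi wt; have wi : w \in odfs_O E i by rewrite Hi in_cons wt orbT.
apply/imsetP => -[[k c]]; rewrite inE /= => dc.
have [t' Hk] := discovered_front dc.
case/edge_of_inj => [[eq_front eq_w]|[eq_fc eq_wf]].
  rewrite eq_front in Hi; move: dc; rewrite /discovered -eq_w.
  by rewrite -(pop_time_unique Hi Hk) wi andbF.
have lt_ki : k < i.
  rewrite ltnNge; apply: contraTN (discovered_unvisited dc) => le_ik; rewrite negbK.
  by apply: (on_stack_visited _ le_ik); rewrite -eq_fc Hi mem_head.
have le_ik : i <= k by apply: (on_stack_before_pop Hk); rewrite -eq_wf.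
by have := leq_trans lt_ki le_ik; rewrite ltnn.
Qed.


Definition stack_pair_edge E (iw : 'I_m * V) : V * V := edge_of (front E iw.1) iw.2.

Lemma stack_pairsP E i w : w \in behead (odfs_O E i) ->
  exists2 t, odfs_O E i = front E i :: t & w \in t.
Proof. by rewrite /front; case: (odfs_O E i) => //= x t wt; exists t. Qed.

Lemma front_notin_stack_tail E i t : odfs_O E i = front E i :: t -> front E i \notin t.
Proof. by move=> Hi; have := odfs_O_uniq E i; rewrite Hi => /andP []. Qed.

Lemma stack_pair_edge_inj E : {in stack_pairs E &, injective (stack_pair_edge E)}.
Proof.
move=> [i w] [j w']; rewrite !inE /= => /stack_pairsP [t Hi wt] /stack_pairsP [t' Hj wt'].
rewrite /stack_pair_edge /= => /edge_of_inj [[eq_front eq_w]|[eq_fw eq_wf]].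
  by subst w'; rewrite eq_front in Hi; rewrite (val_inj (pop_time_unique Hi Hj)).
have le_ji : j <= i by apply: (on_stack_before_pop Hi); rewrite Hj in_cons eq_fw wt' orbT.
have le_ij : i <= j by apply: (on_stack_before_pop Hj); rewrite Hi in_cons -eq_wf wt orbT.
have eq_ij : i = j by apply/val_inj/anti_leq; rewrite le_ij le_ji.
by subst j; move: (front_notin_stack_tail Hi); rewrite -eq_wf wt.
Qed.

Lemma permitted_sub_stack_pairs T : connected_graph T ->
  permitted T \subset stack_pair_edge T @: stack_pairs T.
Proof.
move=> connT; apply/subsetP => -[u w].
rewrite inE /= => /and3P [lt_uw _ /existsP [j /andP [uj wj]]].
have [iu lt_um [tu Hu]] := pop_time_exists connT u.
have [iw lt_wm [tw Hw]] := pop_time_exists connT w.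
have uw : u != w by apply: contraTneq lt_uw => ->; rewrite ltnn.
have Euw : edge_of u w = (u, w) by rewrite /edge_of lt_uw.
apply/imsetP; case: (ltngtP iu iw) => [lt_i|lt_i|eq_i].
- exists (Ordinal lt_um, w); last by rewrite /stack_pair_edge /front /= Hu Euw.
  by rewrite inE /= Hu (stack_order uj wj uw Hu Hw lt_i).
- exists (Ordinal lt_wm, u); last by rewrite /stack_pair_edge /front /= Hw -edge_ofC.
  by rewrite inE /= Hw (stack_order wj uj _ Hw Hu lt_i) // eq_sym.
- by move: Hw; rewrite -eq_i Hu => -[eq_uw _]; rewrite eq_uw eqxx in uw.
Qed.

Lemma stack_pairs_sub_permitted T : is_tree T ->
  stack_pair_edge T @: stack_pairs T \subset permitted T.
Proof.
move=> treeT; apply/subsetP => e /imsetP [[i w]].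
rewrite inE /= => /stack_pairsP [t Hi wt] ->{e}; rewrite /stack_pair_edge /=.
have fw : front T i != w by apply: contraTneq wt => <-; apply: front_notin_stack_tail.
have fi : front T i \in odfs_O T i by rewrite Hi mem_head.
have wi : w \in odfs_O T i by rewrite Hi in_cons wt orbT.
rewrite inE edge_of_lt //= -{2}(dfs_tree_of_tree treeT) (front_pair_not_tree_edge Hi wt).
apply/existsP; exists (Ordinal (leqW (ltn_ord i))).
by rewrite /edge_of; case: (_ < _); rewrite /= ?fi ?wi.
Qed.

Lemma card_permitted T : is_tree T -> #|permitted T| = area T.
Proof.
move=> treeT; have connT : connected_graph T by case/andP: treeT.
rewrite -card_stack_pairs -(card_in_imset (@stack_pair_edge_inj T)).
suff -> : permitted T = stack_pair_edge T @: stack_pairs T by [].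
apply/eqP; rewrite eqEsubset.
by rewrite permitted_sub_stack_pairs // stack_pairs_sub_permitted.
Qed.

End ODFS.

Lemma supported_connected n (T G : {set 'I_n.+1 * 'I_n.+1}) :
  is_tree T -> T \subset G -> G :\: T \subset permitted T -> connected_graph G.
Proof.
case/andP => /andP [/forallP sT /forallP connT] _ sTG sGT; apply/andP; split.
  apply/forallP => e; apply/implyP => eG; case eT: (e \in T); first exact: (implyP (sT e)).
  have : e \in G :\: T by rewrite inE eT eG.
  by move/(subsetP sGT); rewrite inE => /and3P [].
apply/forallP => u; apply/forallP => v; apply: connect_sub (forallP (connT u) v).
by move=> x y xy; apply/connect1/(adj_subset sTG).
Qed.

Lemma surplus_card n (G : {set 'I_n.+1 * 'I_n.+1}) k :
  surplus_is G k = (#|G| == (n.+1 + k).-1).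
Proof. by rewrite /surplus_is addSn addnC. Qed.

Local Open Scope ring_scope.

(* The tilt (1-p)^-a of a tree cancels against the absent permitted edges. *)
Lemma tilt_cancel (F : fieldType) (x P Z : F) (a k : nat) : x != 0 -> (k <= a)%N ->
  x ^- a / Z * P * x ^+ (a - k) = P / x ^+ k / Z.
Proof.
move=> x0 le_ka; rewrite -{1}(subnK le_ka) exprD invfM.
have xak0 : x ^+ (a - k) != 0 by rewrite expf_neq0.
by rewrite [RHS]mulrAC -[LHS]mulrA mulrC -!mulrA mulVKf // [Z^-1 * _]mulrC.
Qed.

Section Law.
Variables (R : realFieldType) (p : R) (n k : nat).
Hypothesis p_lt1 : p < 1.

Definition surplus_weight : R := p ^+ k / (1 - p) ^+ k / tree_Z n.+1 p.

Lemma graph_law_connected (G : {set 'I_n.+1 * 'I_n.+1}) :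
  connected_graph G -> #|G| = (n.+1 + k).-1 -> graph_law p G = surplus_weight.
Proof.
move=> connG cardG; have treeD := dfs_tree_is_tree connG.
rewrite /graph_law (bigD1 (dfs_tree G)) //= big1 ?addr0; last first.
  move=> T /andP [treeT TD]; case: ifP => // /andP [sTG sGT].
  by rewrite -(dfs_tree_unique treeT sTG sGT) eqxx in TD.
have sDG : dfs_tree G \subset G by apply/dfs_tree_sub; case/andP: connG.
rewrite sDG dfs_tree_extra_permitted //=.
have cardGD : #|G :\: dfs_tree G| = k.
  by rewrite cardsD (setIidPr sDG) card_dfs_tree // cardG addSn addKn.
have le_k_area : (k <= area (dfs_tree G))%N.
  by rewrite -cardGD -card_permitted // subset_leq_card // dfs_tree_extra_permitted.
rewrite cardGD card_permitted // /tree_law /tree_weight tilt_cancel //.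
by rewrite subr_eq0 eq_sym; apply: contraTneq p_lt1 => ->; rewrite ltxx.
Qed.

Lemma graph_law_disconnected (G : {set 'I_n.+1 * 'I_n.+1}) :
  ~~ connected_graph G -> graph_law p G = 0.
Proof.
move=> nconnG; rewrite /graph_law big1 // => T treeT.
by case: ifP => // /andP [sTG sGT]; rewrite (supported_connected treeT sTG sGT) in nconnG.
Qed.

Lemma prob_surplus_value : prob_surplus n.+1 p k = surplus_weight *+ n_conn n.+1 k.
Proof.
rewrite /prob_surplus /n_conn -sumr_const; apply/esym.
rewrite big_mkcond /= [RHS]big_mkcond /=; apply: eq_bigr => G _.
rewrite inE surplus_card; case: (boolP (connected_graph G)) => [connG|nconnG] /=.
  by case: eqP => [cardG|//]; rewrite graph_law_connected.
by rewrite graph_law_disconnected // if_same.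
Qed.

End Law.

Theorem corollary4 (R : realFieldType) (p : R) (m k : nat) :
  0 < p -> p < 1 -> (0 < m)%N ->
  0 < prob_surplus m p k ->
  forall G : {set 'I_m * 'I_m},
    cond_law p k G =
      (if connected_graph G && (#|G| == (m + k).-1)%N
       then (n_conn m k)%:R^-1 else 0).
Proof.
case: m => [//|n] _ p_lt1 _ pos_surplus G.
have weight0 : surplus_weight p n k != 0.
  by apply: contraTneq pos_surplus => w0; rewrite prob_surplus_value // w0 mul0rn ltxx.
rewrite /cond_law prob_surplus_value // surplus_card.
case: (boolP (connected_graph G)) => [connG|nconnG] /=; last first.
  by rewrite graph_law_disconnected // if_same mul0r.
case: eqP => [cardG|_]; last by rewrite mul0r.
by rewrite (graph_law_connected p_lt1 connG cardG) -(mulr_natr (surplus_weight p n k)) invfM mulVKf.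
Qed.
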